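(* Let $\Gamma$ be a simple, undirected, connected $r$-regular graph of order $p$ that contains a cycle and has girth $g(\Gamma)\ge 7$. Then $\gamma_{[3R]}(\Gamma)\le 2p-2r^2+3r-2$.
   Context: The girth of a graph is the minimum length of a cycle in it. For a graph $\Gamma=(V,E)$ and $h:V\to\{0,1,2,3,4\}$, let $AN(v)=\{w\in N(v):h(w)\ge 1\}$, $AN[v]=AN(v)\cup\{v\}$ and $h(S)=\sum_{u\in S}h(u)$. $h$ is a triple Roman dominating function (3RDF) if every $v$ with $h(v)<3$ satisfies $h(AN[v])\ge|AN(v)|+3$. The triple Roman domination number $\gamma_{[3R]}(\Gamma)$ is the minimum weight $h(V)$ of a 3RDF of $\Gamma$. *)

From mathcomp Require Import all_boot all_order all_algebra.
Set Implicit Arguments. Unset Strict Implicit. Unset Printing Implicit Defensive.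

Definition simple_graph (T : finType) (e : rel T) : Prop :=
  symmetric e /\ irreflexive e.

Definition nbhd (T : finType) (e : rel T) (v : T) : {set T} := [set w | e v w].

Definition regular (T : finType) (e : rel T) (r : nat) : Prop :=
  forall v : T, #|nbhd e v| = r.

Definition connected_graph (T : finType) (e : rel T) : Prop :=
  forall u v : T, connect e u v.

Definition is_graph_cycle (T : finType) (e : rel T) (c : seq T) : Prop :=
  3 <= size c /\ ucycle e c.

Definition has_cycle (T : finType) (e : rel T) : Prop :=
  exists c : seq T, is_graph_cycle e c.

Definition girth_ge (T : finType) (e : rel T) (g : nat) : Prop :=
  forall c : seq T, is_graph_cycle e c -> g <= size c.

Definition active_nbhd (T : finType) (e : rel T) (h : T -> nat) (v : T) : {set T} :=
  [set w | e v w & 1 <= h w].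

Definition is_3RDF (T : finType) (e : rel T) (h : T -> nat) : Prop :=
  (forall v, h v <= 4) /\
  (forall v, h v < 3 ->
     \sum_(w in active_nbhd e h v) h w + h v >= #|active_nbhd e h v| + 3).

Definition weight (T : finType) (h : T -> nat) : nat := \sum_(v : T) h v.

Definition is_triple_roman_domination_number (T : finType) (e : rel T) (n : nat) : Prop :=
  (exists h, is_3RDF e h /\ weight h = n) /\
  (forall h, is_3RDF e h -> n <= weight h).

From mathcomp Require Import all_boot all_order all_algebra zify.
Import GRing.Theory Num.Theory.

Set Implicit Arguments.
Unset Strict Implicit.
Unset Printing Implicit Defensive.

(* Fix a vertex u and let N2 be the set of vertices at distance two from u.
   Give 0 to u and to N2, 3 to the neighbours of u and 2 to every other vertex.
   Girth at least 7 makes the ball of radius 3 around u look like a tree: N(u)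
   and N2 are independent, every vertex of N2 has a unique neighbour in N(u),
   and every vertex farther away has at most one neighbour in N2.  With minimum
   degree 2 (a regular graph with a cycle) this is a triple Roman dominating
   function, and as |N2| = r(r-1) its weight is 3r + 2(p - 1 - r - r(r-1)). *)

Lemma sum_mem_card (T : finType) (A : {pred T}) : \sum_(x : T) (x \in A : nat) = #|A|.
Proof. by rewrite -sum1_card [RHS]big_mkcond; apply: eq_bigr => x _; case: (x \in A). Qed.

Lemma card_bigcup_disjoint (I T : finType) (P : {pred I}) (A : I -> {set T}) :
    (forall i j x, i \in P -> j \in P -> x \in A i -> x \in A j -> i = j) ->
  #|\bigcup_(i in P) A i| = \sum_(i in P) #|A i|.
Proof.
move=> disjA; rewrite -sum_mem_card; under [RHS]eq_bigr do rewrite -sum_mem_card.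
rewrite exchange_big; apply: eq_bigr => x _.
case: bigcupP => [[i Pi xAi] | notA]; last first.
  by rewrite big1 // => i Pi; apply/eqP; rewrite eqb0; apply: contra_notN notA => xAi; exists i.
rewrite (bigD1 i) //= xAi big1 // => j /andP[Pj ji].
apply/eqP; rewrite eqb0; apply: contraNN ji => xAj.
by rewrite (disjA j i x).
Qed.

Lemma cycle_nbhd_gt1 (T : finType) (e : rel T) (c : seq T) :
  symmetric e -> is_graph_cycle e c -> exists v, 1 < #|nbhd e v|.
Proof.
move=> e_sym [+ /andP[]].
case: c => [|a [|b [|d s]]] //= _ /andP[e_ab] + /andP[_ /andP[b_notin _]].
rewrite -cats1 cat_path /= andbT => /andP[_ /andP[_ e_last]].
exists a; apply/card_gt1P; exists b, (last d s).
rewrite !inE e_ab e_sym e_last; split => //.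
by apply: contraNneq b_notin => ->; rewrite mem_last.
Qed.

(* Inactive neighbours contribute (0).-1 = 0, so the sum may range over the
   whole neighbourhood. *)
Lemma three_rdf_condE (T : finType) (e : rel T) (h : T -> nat) (v : T) :
  (\sum_(w in active_nbhd e h v) h w + h v >= #|active_nbhd e h v| + 3) =
  (\sum_(w in nbhd e v) (h w).-1 + h v >= 3).
Proof.
have -> : \sum_(w in active_nbhd e h v) h w =
          \sum_(w in active_nbhd e h v) (h w).-1 + #|active_nbhd e h v|.
  rewrite -sum1_card -big_split /=; apply: eq_bigr => w.
  by rewrite inE addn1 => /andP[_ /prednK].
have -> : \sum_(w in active_nbhd e h v) (h w).-1 = \sum_(w in nbhd e v) (h w).-1.
  rewrite [RHS](bigID (fun w => 0 < h w)) /= [X in _ + X]big1 ?addn0.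
    by apply: eq_bigl => w; rewrite !inE.
  by move=> w /andP[_]; rewrite lt0n negbK => /eqP->.
by rewrite addnAC [#|_| + 3]addnC leq_add2r.
Qed.

Lemma sum_nbhd_pred_ge2 (T : finType) (e : rel T) (h : T -> nat) (v w1 w2 : T) :
  w1 != w2 -> e v w1 -> e v w2 -> (h w1).-1 + (h w2).-1 <= \sum_(w in nbhd e v) (h w).-1.
Proof.
move=> w12 vw1 vw2; rewrite (bigD1 w1) ?inE //= (bigD1 w2) /= ?inE ?vw2 1?eq_sym //.
by rewrite addnA leq_addr.
Qed.

Lemma nbhd_avoid (T : finType) (e : rel T) (v x : T) :
  1 < #|nbhd e v| -> exists2 w, e v w & w != x.
Proof.
case/card_gt1P => w1 [w2 [vw1 vw2 w12]]; rewrite !inE in vw1 vw2.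
by have [w1x|] := eqVneq w1 x; [exists w2; rewrite // -w1x eq_sym | exists w1].
Qed.

Section GirthSeven.
Variables (T : finType) (e : rel T).
Hypotheses (e_irr : irreflexive e) (e_girth : girth_ge e 7).

Lemma edge_neq a b : e a b -> a != b.
Proof. by apply: contraTneq => ->; rewrite e_irr. Qed.

Lemma no_short_cycle (s : seq T) : 3 <= size s < 7 -> cycle e s -> uniq s -> False.
Proof.
move=> /andP[s_ge3 s_lt7] s_cycle s_uniq.
by have := e_girth (conj s_ge3 (introT andP (conj s_cycle s_uniq))); rewrite leqNgt s_lt7.
Qed.

Lemma triangle_free a b c : e a b -> e b c -> ~~ e c a.
Proof.
move=> ab bc; apply/negP => ca; apply: (@no_short_cycle [:: a; b; c]) => //=.
  by rewrite ab bc ca.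
by rewrite !inE !negb_or (edge_neq ab) (edge_neq bc) eq_sym (edge_neq ca).
Qed.

Lemma square_free a b c d : e a b -> e b c -> e c d -> e d a -> a != c -> b = d.
Proof.
move=> ab bc cd da ac; have [//|bd] := eqVneq b d; exfalso.
apply: (@no_short_cycle [:: a; b; c; d]) => //=; first by rewrite ab bc cd da.
rewrite !inE !negb_or (edge_neq ab) (edge_neq bc) (edge_neq cd) ac bd.
by rewrite eq_sym (edge_neq da).
Qed.

Lemma no_closed_walk5 a b c d f : e a b -> e b c -> e c d -> e d f -> e f a -> False.
Proof.
move=> ab bc cd df fa.
have ac : a != c by apply: contraTneq fa => ->; apply: triangle_free cd df.
have ad : a != d by apply: contraTneq cd => <-; apply: triangle_free ab bc.
have bd : b != d by apply: contraTneq ab => ->; apply: triangle_free df fa.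
have bf : b != f by apply: contraTneq df => <-; apply: triangle_free bc cd.
have cf : c != f by apply: contraTneq bc => ->; apply: triangle_free fa ab.
apply: (@no_short_cycle [:: a; b; c; d; f]) => //=; first by rewrite ab bc cd df fa.
rewrite !inE !negb_or (edge_neq ab) (edge_neq bc) (edge_neq cd) (edge_neq df).
by rewrite ac ad bd bf cf eq_sym (edge_neq fa).
Qed.

Lemma no_hexagon a b c d f k : e a b -> e b c -> e c d -> e d f -> e f k -> e k a ->
  a != c -> b != d -> c != f -> d != k -> f != a -> k != b -> False.
Proof.
move=> ab bc cd df fk ka ac bd cf dk fa kb.
have ad : a != d by apply: contraTneq cd => <-; apply: triangle_free ab bc.
have bf : b != f by apply: contraTneq df => <-; apply: triangle_free bc cd.
have ck : c != k by apply: contraTneq fk => <-; apply: triangle_free cd df.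
apply: (@no_short_cycle [:: a; b; c; d; f; k]) => //=; first by rewrite ab bc cd df fk ka.
rewrite !inE !negb_or (edge_neq ab) (edge_neq bc) (edge_neq cd) (edge_neq df) (edge_neq fk).
by rewrite ac ad bd bf cf ck dk (eq_sym a f) fa (eq_sym b k) kb (eq_sym a k) (edge_neq ka).
Qed.

End GirthSeven.

Definition nbhd2 (T : finType) (e : rel T) (u : T) : {set T} :=
  \bigcup_(x in nbhd e u) (nbhd e x :\ u).

Definition layered_rdf (T : finType) (e : rel T) (u v : T) : nat :=
  if e u v then 3 else if (v == u) || (v \in nbhd2 e u) then 0 else 2.

Section LayeredRDF.
Variables (T : finType) (e : rel T).
Hypotheses (e_sym : symmetric e) (e_irr : irreflexive e) (e_girth : girth_ge e 7).
Variable u : T.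
Local Notation N2 := (nbhd2 e u).
Local Notation h := (layered_rdf e u).

Lemma nbhd2P y : reflect (y != u /\ exists2 x, e u x & e x y) (y \in N2).
Proof.
apply: (iffP bigcupP) => [[x] | [y_u [x ux xy]]].
  by rewrite !inE => ux /andP[y_u xy]; split => //; exists x.
by exists x; rewrite !inE ?y_u.
Qed.

Lemma root_notin_nbhd2 : u \notin N2.
Proof. by apply/nbhd2P; case; rewrite eqxx. Qed.

Lemma nbhd2_not_nbhd y : y \in N2 -> ~~ e u y.
Proof. by case/nbhd2P => _ [x ux xy]; rewrite e_sym (triangle_free e_irr e_girth ux xy). Qed.

Lemma nbhd2_independent y y' : y \in N2 -> y' \in N2 -> ~~ e y y'.
Proof.
move=> /nbhd2P[_ [x ux xy]] /nbhd2P[_ [x' ux' x'y']]; apply/negP => yy'.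
by apply: (no_closed_walk5 e_irr e_girth ux xy yy' _ (_ : e x' u)); rewrite e_sym.
Qed.

Lemma card_nbhd2 r : regular e r -> #|N2| = r * (r - 1).
Proof.
move=> e_reg; rewrite card_bigcup_disjoint; last first.
  move=> x x' y; rewrite !inE => ux ux' /andP[y_u xy] /andP[_ x'y].
  by apply: (square_free e_irr e_girth ux xy); rewrite 1?e_sym // eq_sym.
have card_x x : x \in nbhd e u -> #|nbhd e x :\ u| = r - 1.
  rewrite inE => ux; have := cardsD1 u (nbhd e x).
  by rewrite e_reg inE (e_sym x u) ux /= add1n => ->; rewrite subn1.
by rewrite (eq_bigr _ card_x) sum_nat_const e_reg.
Qed.

Lemma layered_rdf_nbhd x : e u x -> h x = 3.
Proof. by rewrite /layered_rdf => ->. Qed.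

Lemma layered_rdf_far v : v != u -> ~~ e u v -> v \notin N2 -> h v = 2.
Proof. by move=> v_u uv v_N2; rewrite /layered_rdf (negbTE uv) (negbTE v_u) (negbTE v_N2). Qed.

Lemma layered_rdf_nbhd_nbhd2 v w : v \in N2 -> e v w -> 2 <= h w.
Proof.
move=> v_N2 vw; have [uw|uw] := boolP (e u w); first by rewrite layered_rdf_nbhd.
rewrite layered_rdf_far //.
  by apply: contraTneq vw => ->; rewrite e_sym nbhd2_not_nbhd.
by apply: contraTN vw; apply: nbhd2_independent.
Qed.

Lemma layered_rdf_nbhd_far v w :
  v != u -> ~~ e u v -> v \notin N2 -> e v w -> w \notin N2 -> h w = 2.
Proof.
move=> v_u uv v_N2 vw w_N2; apply: layered_rdf_far => //.
  by apply: contraNneq uv => w_u; rewrite e_sym -w_u.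
by apply: contraNN v_N2 => uw; apply/nbhd2P; split => //; exists w; rewrite // e_sym.
Qed.

Lemma nbhd2_nbr_unique v w1 w2 :
  ~~ e u v -> w1 \in N2 -> w2 \in N2 -> e v w1 -> e v w2 -> w1 = w2.
Proof.
move=> uv w1_N2 w2_N2 vw1 vw2; have [//|w12] := eqVneq w1 w2; exfalso.
case/nbhd2P: w1_N2 => w1_u [x1 ux1 x1w1]; case/nbhd2P: w2_N2 => w2_u [x2 ux2 x2w2].
have x_v x : e u x -> x != v by move=> ux; apply: contraNneq uv => <-.
have [x12|x12] := eqVneq x1 x2.
  case/eqP: w12; apply: (square_free e_irr e_girth x1w1 _ vw2 _ (x_v _ ux1)).
    by rewrite e_sym.
  by rewrite x12 e_sym.
apply: (no_hexagon e_irr e_girth ux1 x1w1 (_ : e w1 v) vw2 (_ : e w2 x2) (_ : e x2 u)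
         _ (x_v _ ux1) w12 _ w2_u _).
all: by [rewrite e_sym | rewrite eq_sym ?x_v].
Qed.

Lemma layered_rdf_is_3RDF : (forall v, 1 < #|nbhd e v|) -> is_3RDF e h.
Proof.
move=> deg_gt1; split=> [v | v hv_lt3]; first by rewrite /layered_rdf; do !case: ifP.
rewrite three_rdf_condE.
have [->|v_u] := eqVneq v u.
  case/card_gt1P: (deg_gt1 u) => w1 [w2 [uw1 uw2 w12]]; rewrite !inE in uw1 uw2.
  have := sum_nbhd_pred_ge2 h w12 uw1 uw2.
  by rewrite (layered_rdf_nbhd uw1) (layered_rdf_nbhd uw2); lia.
have uv : ~~ e u v by apply: contraTN hv_lt3 => /layered_rdf_nbhd ->.
have [v_N2|v_far] := boolP (v \in N2).
  case/nbhd2P: (v_N2) => _ [x ux xv].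
  have [w vw wx] := nbhd_avoid x (deg_gt1 v).
  have vx : e v x by rewrite e_sym.
  have := sum_nbhd_pred_ge2 h wx vw vx; rewrite (layered_rdf_nbhd ux).
  by have := layered_rdf_nbhd_nbhd2 v_N2 vw; lia.
case/card_gt1P: (deg_gt1 v) => w1 [w2 [vw1 vw2 w12]]; rewrite !inE in vw1 vw2.
have := sum_nbhd_pred_ge2 h w12 vw1 vw2; rewrite (layered_rdf_far v_u uv v_far).
have far_nbr w : e v w -> w \notin N2 -> h w = 2 := layered_rdf_nbhd_far v_u uv v_far.
have [w1_N2|w1_far] := boolP (w1 \in N2); last by rewrite (far_nbr w1); lia.
have w2_far : w2 \notin N2.
  by apply: contraNN w12 => w2_N2; apply/eqP; apply: nbhd2_nbr_unique uv w1_N2 w2_N2 vw1 vw2.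
by rewrite (far_nbr w2) //; lia.
Qed.

Lemma weight_layered_rdf : weight h + 2 * #|N2| + 2 = 2 * #|T| + #|nbhd e u|.
Proof.
have layer_sum v : h v + 2 * (v \in N2) + 2 * (v \in pred1 u) = 2 + (v \in nbhd e u).
  rewrite !inE; have [->|v_u] := eqVneq v u.
    by rewrite /layered_rdf e_irr eqxx (negbTE root_notin_nbhd2).
  have [uv|uv] := boolP (e u v).
    have v_N2 : v \notin N2 by apply: contraTN uv; apply: nbhd2_not_nbhd.
    by rewrite layered_rdf_nbhd // (negbTE v_N2).
  have [v_N2|v_far] := boolP (v \in N2); last by rewrite layered_rdf_far.
  by rewrite /layered_rdf (negbTE uv) v_N2 orbT.
have sum_T : \sum_(v : T) 2 = 2 * #|T| by rewrite sum_nat_const mulnC.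
have : \sum_v (h v + 2 * (v \in N2) + 2 * (v \in pred1 u)) = \sum_v (2 + (v \in nbhd e u)).
  by apply: eq_bigr => v _; apply: layer_sum.
by rewrite !big_split /= !sum_mem_card big1_eq card1 /weight -sum_T; lia.
Qed.

End LayeredRDF.

Local Open Scope ring_scope.

Theorem corollary10 (T : finType) (e : rel T) (r : nat) (gam : nat) :
  simple_graph e -> connected_graph e -> regular e r -> has_cycle e ->
  girth_ge e 7 ->
  is_triple_roman_domination_number e gam ->
  (gam%:Z <= 2 * (#|T|)%:Z - 2 * (r%:Z) ^+ 2 + 3 * r%:Z - 2).
Proof.
move=> [e_sym e_irr] _ e_reg [c c_cycle] e_girth [_ gam_min].
have [u deg_u] := cycle_nbhd_gt1 e_sym c_cycle.
have deg_gt1 v : (1 < #|nbhd e v|)%N by rewrite e_reg -(e_reg u).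
have gam_le := gam_min _ (layered_rdf_is_3RDF e_sym e_irr e_girth u deg_gt1).
have := weight_layered_rdf e_sym e_irr e_girth u.
rewrite (card_nbhd2 e_sym e_irr e_girth u e_reg) e_reg expr2.
have := deg_gt1 u; rewrite e_reg; nia.
Qed.
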